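(* Let $M$ be a monoid and let $D:M\times M\to\overline{\mathbb N}$ be a mapping. Then the following are equivalent: (i) $D$ is a strict length function for $M$; (ii) $D=D_\chi$ for some strongly faithful elliptic $M$-tree $\chi$. Moreover, if these conditions hold, $\chi$ is unique up to isomorphism of elliptic $M$-trees.
   Context: $\overline{\mathbb N}=\mathbb N\cup\{\omega\}$. A length function for $M$ is $D:M\times M\to\overline{\mathbb N}$ satisfying (L1) $D(m,m')=D(m',m)$; (L2) $D(m',m'')\le D(m,m)$; (L3) $D(m',m'')\le D(m'm,m''m)$; (L4) $D(m,m'')\ge\min\{D(m,m'),D(m',m'')\}$; it is strict if also (L5) $D(m',m'')=D(m,m)\Rightarrow m'=m''$. Rooted trees, rays, maximal rays, uniform rooted trees (all maximal rays have equal length), $\alpha\wedge\beta$ = longest common initial segment of rays, $|\cdot|$ = length. An elliptic $M$-tree is $\chi=(r_0,T,\alpha,\theta)$ with $(r_0,T)$ uniform, $\alpha$ a maximal ray, $\theta$ a monoid homomorphism from $M$ into the monoid of depth-preserving distance-non-increasing self-maps of $\mathrm{Vert}(T)$, such that $\mathrm{Vert}(T)=\bigcup_i\alpha_iM$ (actions extended componentwise to rays). It is strongly faithful if $\alpha m=\alpha m'$ implies $m=m'$. $D_\chi(m,m')=|\alpha m\wedge\alpha m'|$. Isomorphism of elliptic $M$-trees: bijective elliptic contraction carrying $\alpha$ to $\alpha'$ and commuting with the actions. *)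

From Stdlib Require Import Arith.

Inductive nbar : Type := Fin (n : nat) | Omega.

Definition nle (x y : nbar) : Prop :=
  match x, y with
  | _, Omega => True
  | Omega, Fin _ => False
  | Fin a, Fin b => a <= b
  end.

Definition nmin (x y : nbar) : nbar :=
  match x, y with
  | Omega, z => z
  | z, Omega => z
  | Fin a, Fin b => Fin (Nat.min a b)
  end.

Definition is_length_function (M : Type) (mul : M -> M -> M)
    (D : M -> M -> nbar) : Prop :=
  (forall m m', D m m' = D m' m) /\                                   (* L1 *)
  (forall m m' m'', nle (D m' m'') (D m m)) /\                         (* L2 *)
  (forall m m' m'', nle (D m' m'') (D (mul m' m) (mul m'' m))) /\      (* L3 *)
  (forall m m' m'', nle (nmin (D m m') (D m' m'')) (D m m'')).         (* L4 *)

Definition is_strict_length_function (M : Type) (mul : M -> M -> M)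
    (D : M -> M -> nbar) : Prop :=
  is_length_function M mul D /\
  (forall m m' m'', D m' m'' = D m m -> m' = m'').                     (* L5 *)

Record rtree : Type := RTree {
  vert : Type;
  root : vert;
  par : vert -> vert;
  par_root : par root = root;
  reach_root : forall v, exists n, Nat.iter n par v = root
}.

Definition edge (T : rtree) (u v : vert T) : Prop :=
  v <> root T /\ par T v = u.

Definition adj (T : rtree) (u v : vert T) : Prop :=
  edge T u v \/ edge T v u.

Definition walk (T : rtree) (x y : vert T) (k : nat) : Prop :=
  exists w : nat -> vert T,
    w 0 = x /\ w k = y /\ forall i, i < k -> adj T (w i) (w (S i)).

Definition dist_le (T : rtree) (x y : vert T) (n : nat) : Prop :=
  exists k, k <= n /\ walk T x y k.

Definition depth_is (T : rtree) (v : vert T) (n : nat) : Prop :=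
  Nat.iter n (par T) v = root T /\
  forall k, k < n -> Nat.iter k (par T) v <> root T.

Definition depth_preserving (T T' : rtree) (f : vert T -> vert T') : Prop :=
  forall v n, depth_is T v n -> depth_is T' (f v) n.

Definition dist_nonincreasing (T T' : rtree) (f : vert T -> vert T') : Prop :=
  forall x y n, dist_le T x y n -> dist_le T' (f x) (f y) n.

(* Rays: alpha_0 = root, alpha_{i+1} a child of alpha_i, for indices   *)
(* i <= length (length counts edges, possibly omega).  Values at       *)
(* indices beyond the length are irrelevant.                           *)
Record ray (T : rtree) : Type := Ray {
  rlen : nbar;
  rv : nat -> vert T
}.
Arguments Ray {T}.
Arguments rlen {T}.
Arguments rv {T}.

Definition idx_in (T : rtree) (a : ray T) (i : nat) : Prop := nle (Fin i) (rlen a).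

Definition is_ray (T : rtree) (a : ray T) : Prop :=
  rv a 0 = root T /\
  forall i, idx_in T a (S i) -> edge T (rv a i) (rv a (S i)).

Definition initial_seg (T : rtree) (a b : ray T) : Prop :=
  nle (rlen a) (rlen b) /\ forall i, idx_in T a i -> rv a i = rv b i.

Definition maximal_ray (T : rtree) (a : ray T) : Prop :=
  is_ray T a /\
  forall b, is_ray T b -> initial_seg T a b -> nle (rlen b) (rlen a).

Definition uniform (T : rtree) : Prop :=
  forall a b, maximal_ray T a -> maximal_ray T b -> rlen a = rlen b.

Definition ray_eq (T : rtree) (a b : ray T) : Prop :=
  rlen a = rlen b /\ forall i, idx_in T a i -> rv a i = rv b i.

Definition common_prefix (T : rtree) (a b : ray T) (k : nat) : Prop :=
  idx_in T a k /\ idx_in T b k /\ forall i, i <= k -> rv a i = rv b i.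

Definition meet_len (T : rtree) (a b : ray T) (x : nbar) : Prop :=
  forall k, nle (Fin k) x <-> common_prefix T a b k.

Record mtree (M : Type) : Type := MTree {
  mtr : rtree;
  max_ray : ray mtr;
  act : vert mtr -> M -> vert mtr
}.
Arguments mtr {M}.
Arguments max_ray {M}.
Arguments act {M}.

Definition ray_act (M : Type) (chi : mtree M) (a : ray (mtr chi)) (m : M)
  : ray (mtr chi) :=
  Ray (rlen a) (fun i => act chi (rv a i) m).

Definition is_elliptic (M : Type) (mul : M -> M -> M) (one : M)
    (chi : mtree M) : Prop :=
  let T := mtr chi in
  uniform T /\
  maximal_ray T (max_ray chi) /\
  (forall v, act chi v one = v) /\
  (forall v m m', act chi v (mul m m') = act chi (act chi v m) m') /\
  (forall m, depth_preserving T T (fun v => act chi v m)) /\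
  (forall m, dist_nonincreasing T T (fun v => act chi v m)) /\
  (forall v, exists i m, idx_in T (max_ray chi) i /\ v = act chi (rv (max_ray chi) i) m).

Definition strongly_faithful (M : Type) (chi : mtree M) : Prop :=
  forall m m', ray_eq (mtr chi) (ray_act M chi (max_ray chi) m)
                                (ray_act M chi (max_ray chi) m') -> m = m'.

Definition is_Dchi (M : Type) (chi : mtree M) (D : M -> M -> nbar) : Prop :=
  forall m m', meet_len (mtr chi) (ray_act M chi (max_ray chi) m)
                          (ray_act M chi (max_ray chi) m') (D m m').

Definition mtree_iso (M : Type) (chi chi' : mtree M) : Prop :=
  exists (f : vert (mtr chi) -> vert (mtr chi')) (g : vert (mtr chi') -> vert (mtr chi)),
    (forall v, g (f v) = v) /\ (forall w, f (g w) = w) /\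
    depth_preserving (mtr chi) (mtr chi') f /\
    dist_nonincreasing (mtr chi) (mtr chi') f /\
    ray_eq (mtr chi') (Ray (rlen (max_ray chi)) (fun i => f (rv (max_ray chi) i)))
                      (max_ray chi') /\
    (forall v m, f (act chi v m) = act chi' (f v) m).

(* Structure of the proof.
   - Order facts on N ∪ {omega}, and generalities on rooted trees: depths
     are unique, a vertex at depth i of a ray is its i-th vertex, and a
     vertex at depth i+1 within distance 1 of a vertex at depth i is its child.
   - In an elliptic M-tree every vertex is alpha_i m, its parent is
     alpha_{i-1} m, and alpha_i m = alpha_i m' iff i <= D_chi(m,m').  This
     gives (ii) => (i) directly, and also uniqueness: for two elliptic trees
     with the same D the assignment alpha_i m |-> alpha'_i m is a well-defined
     bijection respecting depth, edges and the action.
   - (i) => (ii): from a strict length function we build the tree whose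
     vertices at depth i <= D(1,1) are the balls {m' | i <= D(m,m')}; the
     parent of the ball of radius i is the ball of radius i-1 around the same
     centre and M acts by right translation of centres. *)

From Stdlib Require Import Arith Lia ClassicalEpsilon FunctionalExtensionality
  PropExtensionality ProofIrrelevance.

Lemma nle_trans x y z : nle x y -> nle y z -> nle x z.
Proof. destruct x, y, z; simpl; intros; try lia; auto; contradiction. Qed.

Lemma nle_antisym x y : nle x y -> nle y x -> x = y.
Proof. destruct x, y; simpl; intros; try contradiction; auto. f_equal; lia. Qed.

Lemma nle_of_fin x y : (forall k, nle (Fin k) x -> nle (Fin k) y) -> nle x y.
Proof.
  destruct x as [a|], y as [b|]; simpl; intros H; auto.
  specialize (H (S b) I). lia.
Qed.

Lemma nle_0 x : nle (Fin 0) x.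
Proof. destruct x; simpl; auto; lia. Qed.

Lemma nle_fin_mono i j x : i <= j -> nle (Fin j) x -> nle (Fin i) x.
Proof. intros h h'. apply (nle_trans _ (Fin j)); simpl; auto. Qed.

Lemma nle_succ_or x k : nle (Fin (S k)) x \/ nle x (Fin k).
Proof. destruct x as [n|]; simpl; auto. lia. Qed.

Lemma nle_nmin k x y : nle (Fin k) (nmin x y) <-> nle (Fin k) x /\ nle (Fin k) y.
Proof. destruct x, y; simpl; split; intros; try tauto; try lia. Qed.

Lemma depth_unique T v n n' : depth_is T v n -> depth_is T v n' -> n = n'.
Proof.
  intros [H1 H2] [H3 H4]. destruct (lt_eq_lt_dec n n') as [[h|h]|h]; auto.
  - exfalso; apply (H4 n h H1).
  - exfalso; apply (H2 n' h H3).
Qed.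

Lemma dist_nonincreasing_of_edges T T' (f : vert T -> vert T') :
  (forall u v, edge T u v -> edge T' (f u) (f v)) -> dist_nonincreasing T T' f.
Proof.
  intros Hf x y n [k [Hk [w [H0 [H1 H2]]]]]. exists k; split; auto.
  exists (fun i => f (w i)); repeat split; subst; auto.
  intros i Hi. destruct (H2 i Hi) as [E|E]; [left|right]; apply Hf; auto.
Qed.

Lemma edge_dist1 T u v : edge T u v -> dist_le T u v 1.
Proof.
  intros E. exists 1; split; auto.
  exists (fun j => match j with 0 => u | _ => v end); repeat split; auto.
  intros j hj. replace j with 0 by lia. left. exact E.
Qed.

(* Within distance one, the vertex one level deeper is a child of the other:
   this is how distance-non-increasing, depth-preserving maps preserve edges. *)
Lemma par_of_dist1 T x y i :
  dist_le T x y 1 -> depth_is T x i -> depth_is T y (S i) -> par T y = x.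
Proof.
  intros [k [hk [w [w0 [w1 w2]]]]] Dx Dy. destruct k as [|k].
  - exfalso. rewrite w0 in w1. subst y.
    pose proof (depth_unique _ _ _ _ Dx Dy). lia.
  - replace k with 0 in * by lia. specialize (w2 0 ltac:(lia)). rewrite w0, w1 in w2.
    destruct w2 as [[_ E]|[_ E]]; auto. exfalso.
    destruct Dx as [Dx _]. destruct Dy as [_ Dy]. apply (Dy i ltac:(lia)).
    rewrite <- E, <- Nat.iter_succ_r. simpl. rewrite Dx. apply par_root.
Qed.

Lemma idx_mono T (a : ray T) i j : j <= i -> idx_in T a i -> idx_in T a j.
Proof. unfold idx_in; intros; eapply nle_fin_mono; eauto. Qed.

Lemma ray_iter T (a : ray T) i k : is_ray T a -> idx_in T a i -> k <= i ->
  Nat.iter k (par T) (rv a i) = rv a (i - k).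
Proof.
  intros [_ He] Hi. induction k; intros hk.
  - simpl. f_equal; lia.
  - simpl. rewrite IHk by lia. replace (i - k) with (S (i - S k)) by lia.
    apply He. apply (idx_mono _ _ i); auto; lia.
Qed.

Lemma ray_depth T (a : ray T) i : is_ray T a -> idx_in T a i -> depth_is T (rv a i) i.
Proof.
  intros Ha Hi. split.
  - rewrite ray_iter by auto. rewrite Nat.sub_diag. apply Ha.
  - intros k hk. rewrite ray_iter by (auto; lia).
    replace (i - k) with (S (i - S k)) by lia.
    apply Ha. apply (idx_mono _ _ i); auto; lia.
Qed.

Lemma meet_sym T a b x : meet_len T a b x -> meet_len T b a x.
Proof.
  unfold meet_len, common_prefix. intros H k. rewrite H.
  split; intros [h1 [h2 h3]]; repeat split; auto; intros; symmetry; auto.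
Qed.

Lemma meet_unique T a b x y : meet_len T a b x -> meet_len T a b y -> x = y.
Proof.
  intros H1 H2. apply nle_antisym; apply nle_of_fin; intros k h.
  - apply H2, H1, h.
  - apply H1, H2, h.
Qed.

Lemma meet_self T a x : meet_len T a a x -> x = rlen a.
Proof.
  intros H. apply nle_antisym; apply nle_of_fin; intros k h.
  - apply H in h. apply h.
  - apply H. repeat split; auto.
Qed.

Definition aV {M} (chi : mtree M) (i : nat) (m : M) : vert (mtr chi) :=
  act chi (rv (max_ray chi) i) m.

Lemma Dchi_diag M (chi : mtree M) D m : is_Dchi M chi D -> D m m = rlen (max_ray chi).
Proof. intros H. apply (meet_self _ _ _ (H m m)). Qed.

Section EllipticTree.
Variables (M : Type) (mul : M -> M -> M) (one : M) (chi : mtree M).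
Hypothesis He : is_elliptic M mul one chi.
Local Notation T := (mtr chi).
Local Notation alpha := (max_ray chi).

Lemma aV_one i : aV chi i one = rv alpha i.
Proof. apply He. Qed.

Lemma aV_act i m n : act chi (aV chi i m) n = aV chi i (mul m n).
Proof. unfold aV. symmetry. apply He. Qed.

Lemma aV_surj v : exists p : nat * M, idx_in T alpha (fst p) /\ v = aV chi (fst p) (snd p).
Proof.
  destruct He as (_&_&_&_&_&_&Hs). destruct (Hs v) as [i [m [h1 h2]]].
  exists (i, m); auto.
Qed.

Lemma aV_depth i m : idx_in T alpha i -> depth_is T (aV chi i m) i.
Proof. intros Hi. apply He. apply ray_depth; auto. apply He. Qed.

(* The parent of alpha_{i+1} m is alpha_i m: the image of the edge
   (alpha_i, alpha_{i+1}) has length <= 1 and joins depths i and i+1. *)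
Lemma aV_par i m : idx_in T alpha (S i) -> par T (aV chi (S i) m) = aV chi i m.
Proof.
  intros Hi. destruct He as (_&[Hr _]&_&_&_&Hn&_).
  apply (par_of_dist1 _ _ _ i).
  - apply Hn, edge_dist1, Hr, Hi.
  - apply aV_depth, (idx_mono _ _ (S i)); auto.
  - apply aV_depth, Hi.
Qed.

Lemma aV_iter i k m : idx_in T alpha i -> k <= i ->
  Nat.iter k (par T) (aV chi i m) = aV chi (i - k) m.
Proof.
  intros Hi. induction k; intros hk.
  - simpl. f_equal; lia.
  - simpl. rewrite IHk by lia. replace (i - k) with (S (i - S k)) by lia.
    apply aV_par. apply (idx_mono _ _ i); auto; lia.
Qed.

Variable D : M -> M -> nbar.
Hypothesis HD : is_Dchi M chi D.

Lemma aV_eq_iff i m m' : idx_in T alpha i ->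
  (aV chi i m = aV chi i m' <-> nle (Fin i) (D m m')).
Proof.
  intros Hi. split.
  - intros E. apply (HD m m'). repeat split; auto.
    intros j hj. simpl. fold (aV chi j m) (aV chi j m').
    replace j with (i - (i - j)) by lia.
    rewrite <- !aV_iter by (auto; lia). rewrite E; auto.
  - intros h. apply (HD m m') in h. destruct h as [_ [_ h]]. apply (h i); auto.
Qed.

(* (ii) => (i): L1-L4 are properties of lengths of common initial segments,
   and L5 is strong faithfulness. *)
Lemma Dchi_strict_length_function :
  strongly_faithful M chi -> is_strict_length_function M mul D.
Proof.
  intros Hf. repeat split.
  - intros m m'. apply (meet_unique _ _ _ _ _ (HD m m')). apply meet_sym, HD.
  - intros m m' m''. rewrite (Dchi_diag _ _ _ m HD). apply nle_of_fin. intros k h.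
    apply (HD m' m'') in h. apply h.
  - intros m m' m''. apply nle_of_fin. intros k h.
    apply (HD m' m'') in h. apply (HD (mul m' m) (mul m'' m)).
    destruct h as [h1 [h2 h3]]. repeat split; auto. intros i hi. simpl.
    fold (aV chi i (mul m' m)) (aV chi i (mul m'' m)). rewrite <- !aV_act.
    unfold aV. simpl in h3. rewrite h3; auto.
  - intros m m' m''. apply nle_of_fin. intros k h. apply nle_nmin in h as [h1 h2].
    apply (HD m m') in h1. apply (HD m' m'') in h2. apply (HD m m'').
    destruct h1 as [a1 [a2 a3]]. destruct h2 as [b1 [b2 b3]].
    repeat split; auto. intros i hi. rewrite a3, b3; auto.
  - intros m m' m'' E. apply Hf. rewrite (Dchi_diag _ _ _ m HD) in E.
    split; auto. intros i hi.
    assert (h : nle (Fin i) (D m' m'')) by (rewrite E; apply hi).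
    apply (HD m' m'') in h. destruct h as [_ [_ h]]. apply h; auto.
Qed.

End EllipticTree.

(* The map alpha_i m |-> alpha'_i m, defined through a chosen representation. *)
Definition transfer M mul one (chi chi' : mtree M) (He : is_elliptic M mul one chi)
  (v : vert (mtr chi)) : vert (mtr chi') :=
  let p := proj1_sig (constructive_indefinite_description _ (aV_surj M mul one chi He v)) in
  aV chi' (fst p) (snd p).

Section Transfer.
Variables (M : Type) (mul : M -> M -> M) (one : M) (chi chi' : mtree M).
Variable D : M -> M -> nbar.
Hypotheses (He : is_elliptic M mul one chi) (HD : is_Dchi M chi D).
Hypotheses (He' : is_elliptic M mul one chi') (HD' : is_Dchi M chi' D).

(* Both maximal rays have length D(1,1). *)
Lemma rlen_transfer : rlen (max_ray chi) = rlen (max_ray chi').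
Proof. rewrite <- (Dchi_diag _ _ _ one HD'), (Dchi_diag _ _ _ one HD). auto. Qed.

Lemma idx_transfer i : idx_in _ (max_ray chi) i -> idx_in _ (max_ray chi') i.
Proof. unfold idx_in. rewrite rlen_transfer. auto. Qed.

Lemma transfer_aV i m : idx_in _ (max_ray chi) i ->
  transfer M mul one chi chi' He (aV chi i m) = aV chi' i m.
Proof.
  intros Hi. unfold transfer.
  destruct (constructive_indefinite_description _ _) as [[j n] [Hj E]]. simpl in *.
  assert (j = i) as ->.
  { apply (depth_unique _ (aV chi i m)).
    - rewrite E. apply (aV_depth _ _ _ _ He _ _ Hj).
    - apply (aV_depth _ _ _ _ He _ _ Hi). }
  apply (aV_eq_iff _ _ _ _ He' _ HD' _ _ _ (idx_transfer _ Hi)).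
  apply (aV_eq_iff _ _ _ _ He _ HD _ _ _ Hi). auto.
Qed.

Lemma transfer_depth_preserving :
  depth_preserving _ _ (transfer M mul one chi chi' He).
Proof.
  intros v n Hv. destruct (aV_surj _ _ _ _ He v) as [[i m] [Hi ->]]; simpl in *.
  rewrite transfer_aV by auto.
  pose proof (depth_unique _ _ _ _ Hv (aV_depth _ _ _ _ He _ m Hi)) as ->.
  apply (aV_depth _ _ _ _ He'), idx_transfer, Hi.
Qed.

Lemma transfer_edge u v : edge _ u v ->
  edge _ (transfer M mul one chi chi' He u) (transfer M mul one chi chi' He v).
Proof.
  intros [Hnr Hp].
  destruct (aV_surj _ _ _ _ He v) as [[[|i] m] [Hj ->]]; simpl in *.
  - exfalso. apply Hnr, (aV_depth _ _ _ _ He _ m Hj).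
  - rewrite (aV_par _ _ _ _ He _ _ Hj) in Hp. subst u.
    rewrite !transfer_aV by (auto; apply (idx_mono _ _ (S i)); auto). split.
    + intro R. apply ((proj2 (aV_depth _ _ _ _ He' _ m (idx_transfer _ Hj))) 0); [lia | exact R].
    + apply (aV_par _ _ _ _ He'), idx_transfer, Hj.
Qed.

End Transfer.

Lemma uniqueness M mul one (chi chi' : mtree M) D :
  is_elliptic M mul one chi -> is_Dchi M chi D ->
  is_elliptic M mul one chi' -> is_Dchi M chi' D -> mtree_iso M chi chi'.
Proof.
  intros He HD He' HD'.
  pose proof (transfer_aV M mul one chi chi' D He HD He' HD') as F.
  pose proof (transfer_aV M mul one chi' chi D He' HD' He HD) as G.
  pose proof (idx_transfer M one chi chi' D HD HD') as I.
  pose proof (idx_transfer M one chi' chi D HD' HD) as I'.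
  exists (transfer M mul one chi chi' He), (transfer M mul one chi' chi He').
  refine (conj _ (conj _ (conj _ (conj _ (conj (conj _ _) _))))).
  - intros v. destruct (aV_surj _ _ _ _ He v) as [[i m] [Hi ->]]; simpl in *.
    rewrite F, G; auto.
  - intros w. destruct (aV_surj _ _ _ _ He' w) as [[i m] [Hi ->]]; simpl in *.
    rewrite G, F; auto.
  - apply (transfer_depth_preserving M mul one chi chi' D He HD He' HD').
  - apply dist_nonincreasing_of_edges, (transfer_edge M mul one chi chi' D He HD He' HD').
  - apply (rlen_transfer M one chi chi' D HD HD').
  - intros i Hi. simpl. rewrite <- (aV_one _ _ _ _ He), <- (aV_one _ _ _ _ He').
    apply F; auto.
  - intros v n. destruct (aV_surj _ _ _ _ He v) as [[i m] [Hi ->]]; simpl in *.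
    rewrite (aV_act _ _ _ _ He), !F by auto.
    symmetry. apply (aV_act _ _ _ _ He').
Qed.

Lemma sig_eq (A : Type) (P : A -> Prop) (x y : sig P) : proj1_sig x = proj1_sig y -> x = y.
Proof. destruct x, y; simpl; intros; subst; f_equal; apply proof_irrelevance. Qed.

(* Truncation of an index to the bound L, so that vertices need no proof terms. *)
Definition trunc (L : nbar) (i : nat) : nat :=
  match L with Fin n => Nat.min i n | Omega => i end.

Lemma trunc_le L i : nle (Fin (trunc L i)) L.
Proof. destruct L; simpl; auto; lia. Qed.

Lemma trunc_id L i : nle (Fin i) L -> trunc L i = i.
Proof. destruct L; simpl; auto; lia. Qed.

Section BallTree.
Variables (M : Type) (mul : M -> M -> M) (one : M) (D : M -> M -> nbar).
Hypothesis HD : is_strict_length_function M mul D.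
Local Notation L := (D one one).

Definition ball (i : nat) (m : M) : M -> Prop := fun m' => nle (Fin i) (D m m').

Definition Vt : Type :=
  { p : nat * (M -> Prop) | exists i m, p = (trunc L i, ball (trunc L i) m) }.

Definition vx (i : nat) (m : M) : Vt :=
  exist _ (trunc L i, ball (trunc L i) m) (ex_intro _ i (ex_intro _ m eq_refl)).

Lemma vx_surj (v : Vt) : exists p : nat * M, nle (Fin (fst p)) L /\ v = vx (fst p) (snd p).
Proof.
  destruct v as [p [i [m E]]]. exists (trunc L i, m). split; simpl.
  - apply trunc_le.
  - apply sig_eq. simpl. rewrite E, (trunc_id _ (trunc L i)) by apply trunc_le. auto.
Qed.

Definition vrep (v : Vt) : nat * M :=
  proj1_sig (constructive_indefinite_description _ (vx_surj v)).

Lemma vrep_spec (v : Vt) : nle (Fin (fst (vrep v))) L /\ v = vx (fst (vrep v)) (snd (vrep v)).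
Proof. unfold vrep. destruct (constructive_indefinite_description _ _); auto. Qed.

(* Parent and action, computed on a chosen representative; vpar_vx and vact_vx
   show they do not depend on the choice. *)
Definition vpar (v : Vt) : Vt := vx (pred (fst (vrep v))) (snd (vrep v)).
Definition vact (v : Vt) (n : M) : Vt := vx (fst (vrep v)) (mul (snd (vrep v)) n).

Lemma D_le_top m m' : nle (D m m') L.
Proof. apply HD. Qed.

(* Balls of radius i <= L about m and m' coincide iff i <= D(m,m'): by L1 and L4
   the relation i <= D(_,_) is an equivalence. *)
Lemma vx_eq i j m m' : nle (Fin i) L -> nle (Fin j) L ->
  (vx i m = vx j m' <-> i = j /\ nle (Fin i) (D m m')).
Proof.
  intros Hi Hj. destruct HD as [(H1&H2&_&H4) _]. split.
  - intros E. apply (f_equal (@proj1_sig _ _)) in E. simpl in E.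
    rewrite !trunc_id in E by auto. injection E as <- E2. split; auto.
    assert (Hself : ball i m' m').
    { unfold ball. rewrite (nle_antisym (D m' m') L); auto. }
    rewrite <- E2 in Hself. exact Hself.
  - intros [<- h]. apply sig_eq. simpl. rewrite !trunc_id by auto. f_equal.
    unfold ball. apply functional_extensionality. intros z.
    apply propositional_extensionality. split; intros h'.
    + eapply nle_trans; [|apply (H4 m' m z)]. apply nle_nmin; split; auto. rewrite H1; auto.
    + eapply nle_trans; [|apply (H4 m m' z)]. apply nle_nmin; split; auto.
Qed.

Lemma vpar_vx i m : nle (Fin i) L -> vpar (vx i m) = vx (pred i) m.
Proof.
  intros Hi. unfold vpar. destruct (vrep_spec (vx i m)) as [Hv E].
  destruct (vrep (vx i m)) as [j n]. simpl in *.
  symmetry in E. apply vx_eq in E as [-> h]; auto.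
  apply vx_eq; try (eapply nle_fin_mono; [|exact Hi]; lia). split; auto.
  eapply nle_fin_mono; [|exact h]; lia.
Qed.

(* Right translation of centres is well defined by L3. *)
Lemma vact_vx i m n : nle (Fin i) L -> vact (vx i m) n = vx i (mul m n).
Proof.
  intros Hi. unfold vact. destruct (vrep_spec (vx i m)) as [Hv E].
  destruct (vrep (vx i m)) as [j k]. simpl in *.
  symmetry in E. apply vx_eq in E as [-> h]; auto.
  apply vx_eq; auto. split; auto.
  eapply nle_trans; [exact h|]. apply HD.
Qed.

Lemma vx0 m : vx 0 m = vx 0 one.
Proof. apply vx_eq; try apply nle_0. split; auto; apply nle_0. Qed.

Lemma vpar_iter i k m : nle (Fin i) L -> k <= i ->
  Nat.iter k vpar (vx i m) = vx (i - k) m.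
Proof.
  intros Hi. induction k; intros hk.
  - simpl. f_equal; lia.
  - simpl. rewrite IHk by lia. rewrite vpar_vx by (eapply nle_fin_mono; [|exact Hi]; lia).
    f_equal; lia.
Qed.

Lemma vpar_root : vpar (vx 0 one) = vx 0 one.
Proof. apply vpar_vx, nle_0. Qed.

Lemma vpar_reach v : exists n, Nat.iter n vpar v = vx 0 one.
Proof.
  destruct (vrep_spec v) as [Hv E]. rewrite E. exists (fst (vrep v)).
  rewrite vpar_iter, Nat.sub_diag by auto. apply vx0.
Qed.

Definition ball_tree : rtree := RTree Vt (vx 0 one) vpar vpar_root vpar_reach.

Definition ball_ray : ray ball_tree := @Ray ball_tree L (fun i => vx i one).

Definition ball_mtree : mtree M := MTree M ball_tree ball_ray vact.

Lemma ball_depth i m : nle (Fin i) L -> depth_is ball_tree (vx i m) i.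
Proof.
  intros Hi. split; simpl.
  - rewrite vpar_iter, Nat.sub_diag by auto. apply vx0.
  - intros k hk. rewrite vpar_iter by (auto; lia). intros E.
    apply vx_eq in E as [E _]; try lia; try apply nle_0.
    eapply nle_fin_mono; [|exact Hi]; lia.
Qed.

Lemma ball_depth_inv v n : depth_is ball_tree v n ->
  nle (Fin n) L /\ v = vx n (snd (vrep v)).
Proof.
  intros Hd. destruct (vrep_spec v) as [Hv E].
  assert (n = fst (vrep v)) as ->; auto.
  apply (depth_unique _ v _ _ Hd). rewrite E at 1. apply ball_depth; auto.
Qed.

Lemma ball_edge i m : nle (Fin (S i)) L -> edge ball_tree (vx i m) (vx (S i) m).
Proof.
  intros Hi. split; simpl.
  - intros E. apply vx_eq in E as [E _]; try lia; auto; apply nle_0.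
  - apply vpar_vx; auto.
Qed.

Lemma ball_edge_inv u v : edge ball_tree u v ->
  exists i m, nle (Fin (S i)) L /\ v = vx (S i) m /\ u = vx i m.
Proof.
  intros [Hnr Hp]. simpl in *. destruct (vrep_spec v) as [Hv E].
  destruct (vrep v) as [[|i] m]; simpl in *.
  - exfalso. apply Hnr. rewrite E. apply vx0.
  - exists i, m. repeat split; auto. rewrite <- Hp, E. apply vpar_vx; auto.
Qed.

Lemma ball_ray_le a : is_ray ball_tree a -> nle (rlen a) L.
Proof.
  intros Ha. apply nle_of_fin. intros k hk.
  apply (ball_depth_inv (rv a k)), ray_depth; auto.
Qed.

Lemma ball_ray_extend a k : is_ray ball_tree a -> rlen a = Fin k -> nle (Fin (S k)) L ->
  exists b, is_ray ball_tree b /\ initial_seg ball_tree a b /\ rlen b = Fin (S k).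
Proof.
  intros Ha Rl hk.
  assert (Hk : idx_in _ a k) by (unfold idx_in; rewrite Rl; simpl; lia).
  destruct (ball_depth_inv (rv a k) k) as [_ E]; [apply ray_depth; auto|].
  exists (@Ray ball_tree (Fin (S k))
            (fun i => if i <=? k then rv a i else vx (S k) (snd (vrep (rv a k))))).
  split; [split|split; [split|reflexivity]]; cbn [rv rlen].
  - apply Ha.
  - intros i hi. unfold idx_in in hi; simpl in hi.
    destruct (Nat.leb_spec (S i) k) as [l|l].
    + rewrite (proj2 (Nat.leb_le i k)) by lia. apply Ha.
      unfold idx_in. rewrite Rl. simpl. lia.
    + replace i with k by lia. rewrite Nat.leb_refl. rewrite E at 1. apply ball_edge; auto.
  - rewrite Rl; simpl; lia.
  - intros i hi. unfold idx_in in hi. rewrite Rl in hi. simpl in hi.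
    destruct (Nat.leb_spec i k); auto; lia.
Qed.

Lemma ball_maximal_len a : maximal_ray ball_tree a -> rlen a = L.
Proof.
  intros [Ha Hm]. apply nle_antisym; [apply ball_ray_le; auto|].
  destruct (rlen a) as [k|] eqn:Rl.
  - destruct (nle_succ_or L k) as [hk|hk]; auto.
    destruct (ball_ray_extend a k Ha Rl hk) as [b [Hb [Hs Rb]]].
    specialize (Hm b Hb Hs). rewrite Rb in Hm. simpl in Hm. lia.
  - destruct L; exact I.
Qed.

Lemma ball_ray_maximal : maximal_ray ball_tree ball_ray.
Proof.
  split.
  - split; simpl; auto. intros i hi. apply ball_edge; auto.
  - intros b Hb _. apply ball_ray_le; auto.
Qed.

Hypotheses (mul_assoc : forall a b c, mul a (mul b c) = mul (mul a b) c)
           (mul1m : forall a, mul one a = a) (mulm1 : forall a, mul a one = a).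

Lemma ball_mtree_elliptic : is_elliptic M mul one ball_mtree.
Proof.
  split; [|split; [|split; [|split; [|split; [|split]]]]]; simpl.
  - intros a b Ha Hb. rewrite (ball_maximal_len a), (ball_maximal_len b); auto.
  - apply ball_ray_maximal.
  - intros v. destruct (vrep_spec v) as [Hv E]. rewrite E at 1.
    rewrite vact_vx, mulm1 by auto. auto.
  - intros v m m'. destruct (vrep_spec v) as [Hv E]. rewrite E.
    rewrite !vact_vx, mul_assoc by auto. auto.
  - intros m v n Hd. apply ball_depth_inv in Hd as [Hn E]. rewrite E.
    rewrite vact_vx by auto. apply ball_depth; auto.
  - intros m. apply dist_nonincreasing_of_edges. intros u v He.
    apply ball_edge_inv in He as [i [m0 [Hi [-> ->]]]]. simpl.
    rewrite (vact_vx i) by (eapply nle_fin_mono; [|exact Hi]; lia).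
    rewrite vact_vx by auto. apply ball_edge; auto.
  - intros v. destruct (vrep_spec v) as [Hv E].
    exists (fst (vrep v)), (snd (vrep v)). split; auto.
    rewrite vact_vx, mul1m by auto. auto.
Qed.

Lemma ball_mtree_Dchi : is_Dchi M ball_mtree D.
Proof.
  intros m m' k. unfold common_prefix, idx_in. simpl. split.
  - intros hk. assert (Hk : nle (Fin k) L) by (eapply nle_trans; [exact hk|apply D_le_top]).
    repeat split; auto. intros i hi.
    assert (Hi : nle (Fin i) L) by (eapply nle_fin_mono; [|exact Hk]; lia).
    rewrite !vact_vx, !mul1m by auto.
    apply vx_eq; auto. split; auto. eapply nle_fin_mono; [|exact hk]; lia.
  - intros [Hk [_ h]]. specialize (h k (le_n k)).
    rewrite !vact_vx, !mul1m in h by auto.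
    apply vx_eq in h; auto. apply h.
Qed.

(* Strong faithfulness is axiom L5: equal rays alpha m, alpha m' force D(m,m') = L. *)
Lemma ball_mtree_strongly_faithful : strongly_faithful M ball_mtree.
Proof.
  intros m m' [_ Hr]. simpl in Hr. apply (proj2 HD one).
  apply nle_antisym; [apply D_le_top|]. apply nle_of_fin. intros k hk.
  specialize (Hr k hk). simpl in Hr. rewrite !vact_vx, !mul1m in Hr by auto.
  apply vx_eq in Hr; auto. apply Hr.
Qed.

End BallTree.

Theorem corollary4p9
  (M : Type) (mul : M -> M -> M) (one : M)
  (mul_assoc : forall a b c, mul a (mul b c) = mul (mul a b) c)
  (mul1m : forall a, mul one a = a)
  (mulm1 : forall a, mul a one = a)
  (D : M -> M -> nbar) :
  (is_strict_length_function M mul D <->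
     exists chi : mtree M,
       is_elliptic M mul one chi /\ strongly_faithful M chi /\ is_Dchi M chi D) /\
  (forall chi chi' : mtree M,
       is_elliptic M mul one chi -> strongly_faithful M chi -> is_Dchi M chi D ->
       is_elliptic M mul one chi' -> strongly_faithful M chi' -> is_Dchi M chi' D ->
       mtree_iso M chi chi').
Proof.
  split; [split|].
  - intros HD. exists (ball_mtree M mul one D HD). split; [|split].
    + apply ball_mtree_elliptic; auto.
    + apply ball_mtree_strongly_faithful; auto.
    + apply ball_mtree_Dchi; auto.
  - intros [chi [He [Hf HDchi]]]. apply (Dchi_strict_length_function M mul one chi He); auto.
  - intros chi chi' He _ HDchi He' _ HDchi'. apply (uniqueness M mul one chi chi' D); auto.
Qed.
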